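(* Let $x\in\mathrm{Modasc}_n$. An entry $x(i)=k>1$ is the leftmost occurrence of the integer $k$ in $x$ if and only if $x(i-1)<x(i)$. In particular, $x$ is a Cayley permutation.
   Context: A Cayley permutation is a word of positive integers in which every integer from $1$ to its maximum occurs. Modified ascent sequences: $\mathrm{Modasc}_0=\{\text{empty word}\}$, $\mathrm{Modasc}_1=\{1\}$; for $n\ge2$, $x\in\mathrm{Modasc}_n$ iff there is $v\in\mathrm{Modasc}_{n-1}$ with last letter $b$ such that either $x=va$ with $1\le a\le b$, or $x=\tilde va$ with $b<a\le2+\mathrm{asc}(v)$, where $\mathrm{asc}(v)=|\{i:v(i)<v(i+1)\}|$ and $\tilde v$ is obtained from $v$ by increasing every entry $c\ge a$ by one. *)

From mathcomp Require Import all_boot.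
Set Implicit Arguments. Unset Strict Implicit. Unset Printing Implicit Defensive.

(* Words are sequences of nat; position i (1-indexed in the paper) is
   nth 0 x (i-1) here, i.e. 0-indexed. *)

Definition asc (v : seq nat) : nat :=
  count (fun p : nat * nat => p.1 < p.2) (zip v (behead v)).

Definition tilde (v : seq nat) (a : nat) : seq nat :=
  map (fun c => if a <= c then c.+1 else c) v.

Inductive modasc : nat -> seq nat -> Prop :=
| modasc0 : modasc 0 [::]
| modasc1 : modasc 1 [:: 1]
| modasc_low n v a :
    1 <= n -> modasc n v ->
    1 <= a <= last 0 v -> modasc n.+1 (rcons v a)
| modasc_high n v a :
    1 <= n -> modasc n v ->
    last 0 v < a <= (asc v).+2 -> modasc n.+1 (rcons (tilde v a) a).

Definition maxw (x : seq nat) : nat := foldr maxn 0 x.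

Definition cayley_perm (x : seq nat) : Prop :=
  all (fun c => 0 < c) x /\ forall k, 1 <= k <= maxw x -> k \in x.

From mathcomp Require Import all_boot zify.
Set Implicit Arguments.
Unset Strict Implicit.
Unset Printing Implicit Defensive.

(* Induct along the generation of x, carrying three invariants of a nonempty
   modified ascent sequence: it starts with 1, its set of values is
   {1, ..., asc x + 1}, and an entry is the leftmost occurrence of its value
   exactly when it is the first entry or the top of an ascent.  Appending
   a <= last v repeats an existing value and creates no ascent.  Appending
   a > last v to tilde v a creates one ascent and the one new value a, while
   the relabelling tilde v a = map (bump a) v is strictly increasing, hence
   preserves ascents and leftmost occurrences, fixes the first entry 1
   (as a > last v >= 1) and stretches {1, ..., m} around a to
   {1, ..., m + 1}. *)

Lemma asc_cons2 c d s : asc [:: c, d & s] = (c < d) + asc (d :: s).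
Proof. by []. Qed.

Lemma asc_rcons v a : 0 < size v -> asc (rcons v a) = asc v + (last 0 v < a).
Proof.
case: v => // c s _; elim: s c => [|d s IH] c; first by rewrite /asc /= addn0.
by rewrite /= !asc_cons2 IH addnA.
Qed.

Lemma asc_map f s : {mono f : m n / m <= n} -> asc (map f s) = asc s.
Proof.
move=> mono_f; elim: s => [|c [|d s] IH] //.
by rewrite map_cons !asc_cons2 (leqW_mono mono_f) -map_cons IH.
Qed.

Lemma maxw_leq x m : (maxw x <= m) = all (leq^~ m) x.
Proof. by elim: x => //= c s IH; rewrite geq_max -IH. Qed.

Definition leftmost_at_ascents (x : seq nat) : Prop :=
  forall i, i < size x ->
    (index (nth 0 x i) x == i) = (i == 0) || (nth 0 x i.-1 < nth 0 x i).

Lemma leftmost_at_ascents_rcons v a :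
  0 < size v -> leftmost_at_ascents v -> (a \notin v) = (last 0 v < a) ->
  leftmost_at_ascents (rcons v a).
Proof.
move=> v_gt0 lv new_a i; rewrite size_rcons ltnS leq_eqVlt.
rewrite -cats1 index_cat !nth_cat /= => /orP [/eqP-> | i_lt].
  rewrite ltnn subnn prednK // leqnn nth_last -new_a eqxx (gtn_eqF v_gt0) /=.
  case a_in: (a \in v) => /=; last by rewrite addn0 eqxx.
  by rewrite ltn_eqF // index_mem.
by rewrite i_lt (leq_ltn_trans (leq_pred i) i_lt) mem_nth //; apply: lv.
Qed.

Lemma leftmost_at_ascents_map f v :
  {mono f : m n / m <= n} -> leftmost_at_ascents v ->
  leftmost_at_ascents (map f v).
Proof.
move=> mono_f lv i; rewrite size_map => i_lt.
have i1_lt : i.-1 < size v by apply: leq_ltn_trans (leq_pred i) i_lt.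
rewrite !(set_nth_default (f 0)) ?size_map // !(nth_map 0) //.
by rewrite (index_map (incn_inj mono_f)) (leqW_mono mono_f) lv.
Qed.

Lemma tildeE v a : tilde v a = map (bump a) v.
Proof. by apply: eq_map => c; rewrite /bump; case: (a <= c). Qed.

Lemma bump_id a c : c < a -> bump a c = c.
Proof. by move=> lt_ca; rewrite /bump leqNgt lt_ca. Qed.

Lemma notin_tilde v a : a \notin tilde v a.
Proof.
rewrite tildeE; apply/mapP => -[c _ a_eq].
by have := neq_bump a c; rewrite -a_eq eqxx.
Qed.

Lemma head_tilde v a : head 0 v < a -> head 0 (tilde v a) = head 0 v.
Proof. by rewrite tildeE; case: v => [|c s] //= /bump_id. Qed.

Lemma last_tilde v a : last 0 v < a -> last 0 (tilde v a) = last 0 v.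
Proof.
move=> last_lt; have a_gt0 : 0 < a by apply: leq_ltn_trans last_lt.
by rewrite tildeE -{1}(@bump_id a 0 a_gt0) last_map bump_id.
Qed.

Lemma asc_rcons_tilde v a :
  0 < size v -> last 0 v < a -> asc (rcons (tilde v a) a) = (asc v).+1.
Proof.
move=> v_gt0 last_lt.
rewrite asc_rcons ?size_map // last_tilde // last_lt addn1 tildeE.
by rewrite asc_map //; apply: leq_bump2.
Qed.

Lemma leftmost_at_ascents_tilde v a :
  0 < size v -> last 0 v < a -> leftmost_at_ascents v ->
  leftmost_at_ascents (rcons (tilde v a) a).
Proof.
move=> v_gt0 last_lt lv; apply: leftmost_at_ascents_rcons.
- by rewrite size_map.
- by rewrite tildeE; apply: leftmost_at_ascents_map => //; apply: leq_bump2.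
- by rewrite notin_tilde last_tilde.
Qed.

Lemma tilde_values v a m :
  v =i iota 1 m -> 0 < a <= m.+1 -> rcons (tilde v a) a =i iota 1 m.+1.
Proof.
move=> vals a_in k; rewrite mem_rcons inE tildeE mem_iota.
apply/idP/idP => [/orP [/eqP-> | /mapP [c]] | k_in]; first by lia.
  by rewrite vals mem_iota /bump => c_in ->; lia.
have [k_lt | k_gt | ->] := ltngtP k a; rewrite ?eqxx //; apply/orP; right.
  by apply/mapP; exists k; rewrite ?bump_id // vals mem_iota; lia.
apply/mapP; exists k.-1; first by rewrite vals mem_iota; lia.
by rewrite /bump; lia.
Qed.

Lemma head_rcons v a : 0 < size v -> head 0 (rcons v a) = head 0 v.
Proof. by case: v. Qed.

Lemma mem_last_nonempty v : 0 < size v -> last 0 v \in v.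
Proof. by case: v => // c s _; apply: mem_last. Qed.

Lemma modasc_size n x : modasc n x -> size x = n.
Proof. by elim => // m v a _ _ <- _; rewrite size_rcons ?size_map. Qed.

Lemma modasc_values n x : modasc n x -> 0 < n -> x =i iota 1 (asc x).+1.
Proof.
elim => // [m v a m_gt0 mv IH a_le | m v a m_gt0 mv IH a_gt] _;
  have last_in : 0 < last 0 v <= (asc v).+1
    by rewrite -mem_iota -IH // mem_last_nonempty // (modasc_size mv).
- have a_in : a \in v by rewrite IH // mem_iota; lia.
  rewrite asc_rcons ?(modasc_size mv) // ltnNge (proj2 (andP a_le)) addn0.
  by move=> k; rewrite mem_rcons inE -IH //; case: eqP => // ->.
- rewrite asc_rcons_tilde ?(modasc_size mv) //; last by case/andP: a_gt.
  by apply: tilde_values; [apply: IH | lia].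
Qed.

Lemma modasc_last n x : modasc n x -> 0 < n -> 0 < last 0 x <= (asc x).+1.
Proof.
move=> mx n_gt0; rewrite -mem_iota -(modasc_values mx) //.
by apply: mem_last_nonempty; rewrite (modasc_size mx).
Qed.

Lemma modasc_head n x : modasc n x -> 0 < n -> head 0 x = 1.
Proof.
elim => // [m v a m_gt0 mv IH _ _ | m v a m_gt0 mv IH a_gt _];
  have v_gt0 : 0 < size v by rewrite (modasc_size mv).
- by rewrite head_rcons // IH.
- have last_in := modasc_last mv m_gt0.
  rewrite head_rcons ?size_map // head_tilde IH //; lia.
Qed.

Lemma modasc_leftmost_at_ascents n x : modasc n x -> leftmost_at_ascents x.
Proof.
elim => [i | [] | m v a m_gt0 mv IH a_le | m v a m_gt0 mv IH a_gt] //.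
- have v_gt0 : 0 < size v by rewrite (modasc_size mv).
  apply: leftmost_at_ascents_rcons => //.
  have /andP [a_gt0 a_le_last] := a_le.
  have last_in := modasc_last mv m_gt0.
  have a_in : a \in v by rewrite (modasc_values mv m_gt0) mem_iota; lia.
  by rewrite a_in ltnNge a_le_last.
- apply: leftmost_at_ascents_tilde => //; first by rewrite (modasc_size mv).
  by case/andP: a_gt.
Qed.

Theorem lemma2p1 (n : nat) (x : seq nat) :
  modasc n x ->
  (forall i, i < size x -> 1 < nth 0 x i ->
     (index (nth 0 x i) x == i) <-> (0 < i /\ nth 0 x i.-1 < nth 0 x i))
  /\ cayley_perm x.
Proof.
case: n => [|n] mx.
  rewrite (size0nil (modasc_size mx)); split=> //; split=> // k.
  by case/andP=> k_gt0 /(leq_trans k_gt0).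
have vals := modasc_values mx (ltn0Sn n).
have vals_bounded : all (fun c => 0 < c <= (asc x).+1) x.
  by apply/allP => c; rewrite vals mem_iota.
split; last split.
- move=> [|i] i_lt; first by rewrite nth0 (modasc_head mx).
  by rewrite (modasc_leftmost_at_ascents mx) //=; split=> [-> | []].
- by apply: sub_all vals_bounded => c /andP [].
- move=> k /andP [k_gt0 k_le]; rewrite vals mem_iota k_gt0 add1n ltnS.
  apply: leq_trans k_le _; rewrite maxw_leq.
  by apply: sub_all vals_bounded => c /andP [].
Qed.
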